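(* Let $\mathsf V$ be a variety and $\theta$ a congruence of $\mathbf F_{\mathsf V}(z)$. Then $\theta$ is an E-congruence if and only if there are exact congruences $\theta_1,\dots,\theta_m$ of $\mathbf F_{\mathsf V}(z)$ (for some $m\ge1$) such that $\theta=\bigcap_{k=1}^m\theta_k$.
   Context: $\mathbf F_{\mathsf V}(z)$ is the free algebra of the variety $\mathsf V$ on one generator $z$. An algebra is exact in $\mathsf V$ if it is isomorphic to a finitely generated subalgebra of a finitely generated free algebra of $\mathsf V$. A congruence $\theta$ of $\mathbf F_{\mathsf V}(z)$ is exact if $\mathbf F_{\mathsf V}(z)/\theta$ is exact in $\mathsf V$. An algebraic e-generalization problem is a homomorphism $h:\mathbf F_{\mathsf V}(z)\to\prod_{k=1}^m\mathbf E_k$ ($m\ge1$) where each $\mathbf E_k$ is a 1-generated exact algebra in $\mathsf V$ and $p_k\circ h$ is surjective onto $\mathbf E_k$ for each projection $p_k$. A congruence $\theta$ of $\mathbf F_{\mathsf V}(z)$ is an E-congruence if $\theta=\ker(h)$ for some algebraic e-generalization problem $h$, where $\ker(h)=\{(a,a'):h(a)=h(a')\}$. *)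

From mathcomp Require Import all_boot.
From Stdlib Require Import ClassicalEpsilon.
From Stdlib Require List.

Set Implicit Arguments.
Unset Strict Implicit.
Unset Printing Implicit Defensive.

Record signature := Signature { ops : Type; arity : ops -> nat }.

Record algebra (S : signature) := Algebra {
  carrier :> Type;
  op : forall f : ops S, ('I_(arity f) -> carrier) -> carrier }.
Arguments op {S} a f _ : rename.

Inductive term (S : signature) (X : Type) : Type :=
| Var : X -> term S X
| App : forall f : ops S, ('I_(arity f) -> term S X) -> term S X.
Arguments Var {S X} x.
Arguments App {S X} f ts.

Fixpoint eval (S : signature) (X : Type) (A : algebra S) (v : X -> A)
    (t : term S X) : A :=
  match t with
  | Var x => v x
  | App f ts => op A f (fun i => eval v (ts i))
  end.

(* A variety is given (Birkhoff) as the class of models of a set of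
   identities, i.e. pairs of terms in countably many variables. *)
Definition identities (S : signature) := term S nat -> term S nat -> Prop.

Definition in_variety (S : signature) (V : identities S) (A : algebra S) : Prop :=
  forall t s, V t s -> forall v : nat -> A, eval v t = eval v s.

Definition hom (S : signature) (A B : algebra S) (h : A -> B) : Prop :=
  forall f (args : 'I_(arity f) -> A), h (op A f args) = op B f (fun i => h (args i)).

Definition isomorphic (S : signature) (A B : algebra S) : Prop :=
  exists h : A -> B, hom h /\ bijective h.

Definition congruence (S : signature) (A : algebra S) (th : A -> A -> Prop) : Prop :=
  (forall a, th a a) /\ (forall a b, th a b -> th b a) /\
  (forall a b c, th a b -> th b c -> th a c) /\
  (forall f (args1 args2 : 'I_(arity f) -> A),
     (forall i, th (args1 i) (args2 i)) -> th (op A f args1) (op A f args2)).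

Definition quot_carrier (S : signature) (A : algebra S) (th : A -> A -> Prop) :=
  {P : A -> Prop | exists a : A, P = th a}.

Definition cls (S : signature) (A : algebra S) (th : A -> A -> Prop) (a : A)
  : quot_carrier th := exist _ (th a) (ex_intro _ a erefl).

Definition rep (S : signature) (A : algebra S) (th : A -> A -> Prop)
  (q : quot_carrier th) : A :=
  proj1_sig (constructive_indefinite_description _ (proj2_sig q)).

Definition quotient (S : signature) (A : algebra S) (th : A -> A -> Prop)
  : algebra S :=
  @Algebra S (quot_carrier th)
    (fun f args => cls th (op A f (fun i => rep (args i)))).

Definition term_algebra (S : signature) (X : Type) : algebra S :=
  @Algebra S (term S X) (@App S X).

Definition veq (S : signature) (V : identities S) (X : Type)
  (t s : term S X) : Prop :=
  forall A : algebra S, in_variety V A -> forall v : X -> A, eval v t = eval v s.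

Definition free_algebra (S : signature) (V : identities S) (X : Type) : algebra S :=
  quotient (A := term_algebra S X) (veq V (X:=X)).

Inductive generated (S : signature) (A : algebra S) (G : A -> Prop) : A -> Prop :=
| gen_base a : G a -> generated G a
| gen_op f (args : 'I_(arity f) -> A) :
    (forall i, generated G (args i)) -> generated G (op A f args).

Definition subalgebra (S : signature) (A : algebra S) (G : A -> Prop) : algebra S :=
  @Algebra S {a : A | generated G a}
    (fun f args => exist _ (op A f (fun i => proj1_sig (args i)))
                     (gen_op (fun i => proj2_sig (args i)))).

Definition prod_algebra (S : signature) (I : Type) (E : I -> algebra S)
  : algebra S :=
  @Algebra S (forall i, E i) (fun f args => fun i => op (E i) f (fun j => args j i)).

Definition one_generated (S : signature) (A : algebra S) : Prop :=
  exists a : A, forall b : A, generated (fun x => x = a) b.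

(* A is exact in V: isomorphic to a finitely generated subalgebra of a
   finitely generated free algebra F_V(x_0,...,x_{n-1}). *)
Definition exact_algebra (S : signature) (V : identities S) (A : algebra S) : Prop :=
  exists (n : nat) (gens : list (free_algebra V 'I_n)),
    isomorphic A (subalgebra (fun a => List.In a gens)).

Definition F1 (S : signature) (V : identities S) : algebra S := free_algebra V unit.

Definition exact_congruence (S : signature) (V : identities S)
  (th : F1 V -> F1 V -> Prop) : Prop :=
  exact_algebra V (quotient th).

Definition e_gen_problem (S : signature) (V : identities S) (m : nat)
  (E : 'I_m -> algebra S) (h : F1 V -> prod_algebra E) : Prop :=
  (0 < m)%N /\
  (forall k, one_generated (E k) /\ exact_algebra V (E k)) /\
  hom (B := prod_algebra E) h /\
  (forall k (e : E k), exists a, h a k = e).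

Definition E_congruence (S : signature) (V : identities S)
  (th : F1 V -> F1 V -> Prop) : Prop :=
  exists (m : nat) (E : 'I_m -> algebra S) (h : F1 V -> prod_algebra E),
    e_gen_problem h /\ (forall a b, th a b <-> h a = h b).

From Stdlib Require Import FunctionalExtensionality PropExtensionality ProofIrrelevance ClassicalEpsilon.
From mathcomp Require Import all_boot.

Set Implicit Arguments.
Unset Strict Implicit.
Unset Printing Implicit Defensive.

(* A homomorphism h into a product has kernel the intersection
   of the kernels of its components p_k o h, and by the first isomorphism
   theorem F_V(z)/ker(p_k o h) is isomorphic to E_k, so these kernels are
   exact.  Conversely, given exact congruences theta_k, the map
   a |-> (a/theta_k)_k into the product of the quotients is an
   e-generalization problem (each quotient of F_V(z) is 1-generated)
   whose kernel is the intersection of the theta_k. *)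

Definition kernel (A B : Type) (h : A -> B) (a a' : A) : Prop := h a = h a'.

Section Quotient.

Variables (S : signature) (A : algebra S) (th : A -> A -> Prop).

Lemma quot_val_inj (q q' : quot_carrier th) : proj1_sig q = proj1_sig q' -> q = q'.
Proof.
by case: q q' => [P p] [P' p'] /= eqPP'; subst; congr exist; apply: proof_irrelevance.
Qed.

Lemma cls_rep (q : quot_carrier th) : cls th (rep q) = q.
Proof.
apply: quot_val_inj; rewrite /rep /=.
by case: constructive_indefinite_description.
Qed.

Lemma cls_surj (q : quot_carrier th) : exists a, cls th a = q.
Proof. by exists (rep q); apply: cls_rep. Qed.

Hypothesis th_cong : congruence th.

Lemma cls_eqP a a' : cls th a = cls th a' <-> th a a'.
Proof.
have [th_refl [th_sym [th_trans _]]] := th_cong.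
split=> [/(f_equal (@proj1_sig _ _)) /= -> // | th_aa'].
apply: quot_val_inj => /=; apply: functional_extensionality => b.
by apply: propositional_extensionality; split; eauto.
Qed.

Lemma rep_cls a : th a (rep (cls th a)).
Proof. by apply/cls_eqP; rewrite cls_rep. Qed.

Lemma cls_hom : hom (B := quotient th) (cls th).
Proof.
have [_ [_ [_ th_op]]] := th_cong.
by move=> f args; apply/cls_eqP; apply: th_op => i; apply: rep_cls.
Qed.

End Quotient.

Section Homomorphisms.

Variables (S : signature) (A B : algebra S) (h : A -> B).
Hypothesis h_hom : hom h.

Lemma kernel_congruence : congruence (kernel h).
Proof.
rewrite /kernel; split; first by [].
split; first by move=> a a' ->.
split; first by move=> a a' a'' -> ->.
move=> f args args' eq_args; rewrite !h_hom; congr (op B f _).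
exact: functional_extensionality.
Qed.

Hypothesis h_surj : forall b, exists a, h a = b.

Theorem first_isomorphism : isomorphic (quotient (kernel h)) B.
Proof.
have kerC := kernel_congruence.
pose pre b := proj1_sig (constructive_indefinite_description _ (h_surj b)).
have h_pre b : h (pre b) = b.
  by rewrite /pre; case: constructive_indefinite_description.
exists (fun q => h (rep q)); split.
  move=> f args /=; rewrite -h_hom; exact/esym/(rep_cls kerC).
exists (fun b => cls (kernel h) (pre b)) => [q | b]; last first.
  by rewrite -(rep_cls kerC (pre b)) h_pre.
by rewrite -[RHS]cls_rep; apply/(cls_eqP kerC); rewrite /kernel h_pre.
Qed.

Lemma one_generated_image : one_generated A -> one_generated B.
Proof.
move=> [g gen_g]; exists (h g) => b; have [a <-] := h_surj b.
elim: (gen_g a) => [_ -> | f args _ IH]; first exact: gen_base.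
by rewrite h_hom; apply: gen_op.
Qed.

End Homomorphisms.

Lemma iso_trans (S : signature) (A B C : algebra S) :
  isomorphic A B -> isomorphic B C -> isomorphic A C.
Proof.
move=> [f [f_hom f_bij]] [g [g_hom g_bij]]; exists (g \o f); split.
  by move=> o args /=; rewrite f_hom g_hom.
exact: bij_comp.
Qed.

Lemma exact_algebra_iso (S : signature) (V : identities S) (A B : algebra S) :
  isomorphic A B -> exact_algebra V B -> exact_algebra V A.
Proof. by move=> isoAB [n [gens isoB]]; exists n, gens; apply: iso_trans isoB. Qed.

Lemma hom_prodP (S : signature) (A : algebra S) (I : Type) (E : I -> algebra S)
    (h : A -> prod_algebra E) :
  hom (B := prod_algebra E) h <-> forall k, hom (fun a => h a k).
Proof.
split=> [h_hom k f args | h_hom f args]; first by rewrite h_hom.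
by apply: functional_extensionality_dep => k; apply: h_hom.
Qed.

Lemma term_algebra_one_generated (S : signature) :
  one_generated (term_algebra S unit).
Proof.
exists (Var tt); elim=> [[] | f ts IH]; first exact: gen_base.
exact: (gen_op (A := term_algebra S unit)).
Qed.

Lemma veq_congruence (S : signature) (V : identities S) (X : Type) :
  congruence (A := term_algebra S X) (veq V (X := X)).
Proof.
split; first by [].
split; first by move=> t t' eq_tt' A A_V v; rewrite eq_tt'.
split; first by move=> t t' t'' eq1 eq2 A A_V v; rewrite eq1 ?eq2.
move=> f ts ts' eq_ts A A_V v /=; congr (op A f _).
by apply: functional_extensionality => i; apply: eq_ts.
Qed.

Lemma quotient_F1_one_generated (S : signature) (V : identities S)
    (th : F1 V -> F1 V -> Prop) :
  congruence th -> one_generated (quotient th).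
Proof.
move=> thC; apply: (one_generated_image (cls_hom thC) (@cls_surj _ _ th)).
exact: (one_generated_image (cls_hom (veq_congruence V unit)) (@cls_surj _ _ _))
         (term_algebra_one_generated S).
Qed.

Theorem theorem4p4 (S : signature) (V : identities S)
  (th : F1 V -> F1 V -> Prop) :
  congruence th ->
  (E_congruence th <->
   exists (m : nat) (ths : 'I_m -> (F1 V -> F1 V -> Prop)),
     (0 < m)%N /\
     (forall k, congruence (ths k) /\ exact_congruence (ths k)) /\
     (forall a b, th a b <-> (forall k, ths k a b))).
Proof.
move=> thC; split.
- move=> [m [E [h [[m_gt0 [E_ok [h_hom h_surj]]] th_ker]]]].
  have hk_hom := proj1 (hom_prodP h) h_hom.
  exists m, (fun k => kernel (fun a => h a k)); split; [done | split].
  + move=> k; split; first exact: kernel_congruence.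
    exact: exact_algebra_iso (first_isomorphism (hk_hom k) (h_surj k)) (E_ok k).2.
  + move=> a b; rewrite th_ker; split=> [eq_hab k | eq_hab].
      by rewrite /kernel eq_hab.
    exact: functional_extensionality_dep.
- move=> [m [ths [m_gt0 [ths_ok th_meet]]]].
  have thkC k := (ths_ok k).1.
  exists m, (fun k => quotient (ths k)), (fun a k => cls (ths k) a).
  split; first split; [done | split; [| split] |].
  + by move=> k; split; [apply: quotient_F1_one_generated | apply: (ths_ok k).2].
  + by apply/hom_prodP => k; apply: cls_hom.
  + by move=> k; apply: cls_surj.
  + move=> a b; rewrite th_meet; split=> [ths_ab | eq_cls k].
      by apply: functional_extensionality_dep => k; apply/cls_eqP.
    exact/(cls_eqP (thkC k))/(equal_f_dep eq_cls k).
Qed.
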